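(* Let $\delta\in[1/3,1]$, $\alpha>0$ with $\alpha\delta<1$, $\eta_0^{2}=\frac{1+\alpha^{2}}{1+\delta^{2}}$, $0\le B_0\le\sqrt{1-\eta_0^2\delta^2}$, and $\widetilde{A_\ast}=\sqrt{1-(1+\delta^2)B_0^2}$. Define $\lambda_r,\lambda_i\ge0$ by $$2\lambda_r^{2}=\sqrt2\,\widetilde{A_\ast}+\varepsilon^{2}B_0^{2}(1+\delta^{2})^{2},\qquad 2\lambda_i^{2}=\sqrt2\,\widetilde{A_\ast}-\varepsilon^{2}B_0^{2}(1+\delta^{2})^{2}.$$ If $\alpha\ge\frac{10}{3}\varepsilon^2$ and $\varepsilon>0$ is small enough, then $$\lambda_r\lambda_i\ge\frac{\widetilde{A_\ast}}{2},\qquad \frac{\widetilde{A_\ast}^{1/2}}{2^{1/4}}\le\lambda_r\le2^{1/4}\widetilde{A_\ast}^{1/2},\qquad \frac{\widetilde{A_\ast}^{1/2}}{2^{5/4}}\le\lambda_i\le\frac{\widetilde{A_\ast}^{1/2}}{2^{1/4}},$$ while $\widetilde{A_\ast}$ varies from $1$ to $\alpha\delta$ as $B_0$ varies from $0$ to $\sqrt{1-\eta_0^2\delta^2}$.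
   Context: The numbers $\lambda_r\pm i\lambda_i$, $-\lambda_r\pm i\lambda_i$ are the nonzero roots of $\lambda^4-2\varepsilon^2B_0^2(1+\delta^2)^2\lambda^2+2\widetilde{A_\ast}^2=0$. *)

From mathcomp Require Import all_boot all_order all_algebra.
From mathcomp Require Import reals.
Set Implicit Arguments. Unset Strict Implicit. Unset Printing Implicit Defensive.
Import Order.TTheory GRing.Theory Num.Theory.
Local Open Scope ring_scope.

Definition eta0sq {R : realType} (alpha delta : R) : R :=
  (1 + alpha ^+ 2) / (1 + delta ^+ 2).

Definition B0max {R : realType} (alpha delta : R) : R :=
  Num.sqrt (1 - eta0sq alpha delta * delta ^+ 2).

Definition Atilde {R : realType} (delta B0 : R) : R :=
  Num.sqrt (1 - (1 + delta ^+ 2) * B0 ^+ 2).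

From mathcomp Require Import all_boot all_order all_algebra.
From mathcomp Require Import reals.
From mathcomp Require Import ring lra.
Set Implicit Arguments. Unset Strict Implicit. Unset Printing Implicit Defensive.
Import Order.TTheory GRing.Theory Num.Theory.
Local Open Scope ring_scope.

(* Write s = sqrt 2, A = \widetilde{A_*} and E = eps^2 B0^2 (1 + delta^2)^2, so
   that 2 lr^2 = s A + E and 2 li^2 = s A - E.  Every root bound follows from
   0 <= E <= A by squaring, using 1 <= s <= 3/2 and 4 (lr li)^2 = 2 A^2 - E^2.
   The bound E <= A holds for every eps with alpha >= 10/3 eps^2, because
   (1 + delta^2) B0^2 <= 1, 1 + delta^2 <= 10/3 delta on [1/3, 3] and
   alpha delta <= A; hence any positive eps0 works. *)

Section Atilde.
Variable R : realType.
Implicit Types (eps alpha delta B : R).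

Lemma one_add_sqr_gt0 delta : 0 < 1 + delta ^+ 2.
Proof. by rewrite ltr_pwDl // sqr_ge0. Qed.

Lemma Atilde0 delta : Atilde delta 0 = 1.
Proof. by rewrite /Atilde expr0n /= mulr0 subr0 sqrtr1. Qed.

Lemma B0max_sqr alpha delta : (alpha * delta) ^+ 2 <= 1 ->
  (1 + delta ^+ 2) * B0max alpha delta ^+ 2 = 1 - (alpha * delta) ^+ 2.
Proof.
have hD := lt0r_neq0 (one_add_sqr_gt0 delta).
move=> had; rewrite sqr_sqrtr; first by rewrite /eta0sq; field.
have -> : 1 - eta0sq alpha delta * delta ^+ 2
          = (1 - (alpha * delta) ^+ 2) / (1 + delta ^+ 2) by rewrite /eta0sq; field.
by rewrite divr_ge0 ?subr_ge0 // ltW ?one_add_sqr_gt0.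
Qed.

Lemma le_B0max_sqr alpha delta B : (alpha * delta) ^+ 2 <= 1 ->
  0 <= B -> B <= B0max alpha delta ->
  (1 + delta ^+ 2) * B ^+ 2 <= 1 - (alpha * delta) ^+ 2.
Proof.
move=> had hB hBm; rewrite -B0max_sqr // ler_pM2l ?one_add_sqr_gt0 //.
by rewrite ler_sqr ?nnegrE // (le_trans hB).
Qed.

Lemma le_B0max_le1 alpha delta B : (alpha * delta) ^+ 2 <= 1 ->
  0 <= B -> B <= B0max alpha delta -> (1 + delta ^+ 2) * B ^+ 2 <= 1.
Proof.
move=> had hB hBm; apply: le_trans (le_B0max_sqr had hB hBm) _.
by rewrite lerBlDr lerDl sqr_ge0.
Qed.

Lemma Atilde_B0max alpha delta : (alpha * delta) ^+ 2 <= 1 ->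
  Atilde delta (B0max alpha delta) = `|alpha * delta|.
Proof. by move=> had; rewrite /Atilde B0max_sqr // opprB addrC subrK sqrtr_sqr. Qed.

Lemma Atilde_decreasing delta B1 B2 : 0 <= B1 -> B1 < B2 ->
  (1 + delta ^+ 2) * B2 ^+ 2 <= 1 -> Atilde delta B2 < Atilde delta B1.
Proof.
move=> hB1 hB12 hB2.
have hsq : (1 + delta ^+ 2) * B1 ^+ 2 < (1 + delta ^+ 2) * B2 ^+ 2.
  by rewrite ltr_pM2l ?one_add_sqr_gt0 // ltr_sqr ?nnegrE // ltW ?(le_lt_trans hB1).
by rewrite ltr_sqrt ?ltrD2l ?ltrN2 // subr_gt0 (lt_le_trans hsq).
Qed.

Lemma Atilde_ge alpha delta B : (alpha * delta) ^+ 2 <= 1 ->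
  0 <= B -> B <= B0max alpha delta -> `|alpha * delta| <= Atilde delta B.
Proof.
move=> had hB; rewrite -Atilde_B0max // le_eqVlt => /predU1P[->//|hBm].
by rewrite ltW // Atilde_decreasing // (le_B0max_le1 had) ?sqrtr_ge0.
Qed.

Lemma one_add_sqr_le delta : 3^-1 <= delta -> delta <= 3 ->
  1 + delta ^+ 2 <= 10 / 3 * delta.
Proof. by move=> h1 h2; nra. Qed.

Lemma perturbation_le_Atilde eps alpha delta B0 :
  3^-1 <= delta -> delta <= 3 -> (alpha * delta) ^+ 2 <= 1 ->
  0 <= B0 -> B0 <= B0max alpha delta -> 10 / 3 * eps ^+ 2 <= alpha ->
  eps ^+ 2 * B0 ^+ 2 * (1 + delta ^+ 2) ^+ 2 <= Atilde delta B0.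
Proof.
move=> hd1 hd3 had hB hBm hae.
apply: le_trans (le_trans (ler_norm _) (Atilde_ge had hB hBm)).
have -> : eps ^+ 2 * B0 ^+ 2 * (1 + delta ^+ 2) ^+ 2
          = eps ^+ 2 * (1 + delta ^+ 2) * ((1 + delta ^+ 2) * B0 ^+ 2) by ring.
have hepsD : 0 <= eps ^+ 2 * (1 + delta ^+ 2).
  by rewrite mulr_ge0 ?sqr_ge0 // ltW ?one_add_sqr_gt0.
apply: le_trans (_ : eps ^+ 2 * (1 + delta ^+ 2) <= _).
  by rewrite ler_piMr // (le_B0max_le1 had).
apply: le_trans (_ : eps ^+ 2 * (10 / 3 * delta) <= _).
  by rewrite ler_wpM2l ?sqr_ge0 ?one_add_sqr_le.
rewrite mulrA [_ * (10 / 3)]mulrC ler_wpM2r //.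
by apply: le_trans hd1; rewrite invr_ge0.
Qed.

End Atilde.

Lemma le_of_sqr_le (R : realType) (x y : R) : 0 <= y -> x ^+ 2 <= y ^+ 2 -> x <= y.
Proof.
move=> hy hxy; have [hx|/ltW hx] := lerP 0 x; last exact: le_trans hx hy.
by rewrite -ler_sqr ?nnegrE.
Qed.

Section CharacteristicRoots.
Variable R : realType.
Variables (s A E lr li : R).
Hypotheses (s_gt0 : 0 < s) (s_sqr : s ^+ 2 = 2).
Hypotheses (A_ge0 : 0 <= A) (E_ge0 : 0 <= E) (E_le_A : E <= A).
Hypotheses (lr_ge0 : 0 <= lr) (li_ge0 : 0 <= li).
Hypothesis lr_sqr : 2 * lr ^+ 2 = s * A + E.
Hypothesis li_sqr : 2 * li ^+ 2 = s * A - E.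

Let s_ge1 : 1 <= s.
Proof. by apply: le_of_sqr_le; [exact: ltW | rewrite s_sqr expr1n; lra]. Qed.
Let s_le3half : s <= 3 / 2.
Proof. by apply: le_of_sqr_le; [lra | rewrite s_sqr; lra]. Qed.
Let sqrt_s_sqr : Num.sqrt s ^+ 2 = s. Proof. by rewrite sqr_sqrtr ?ltW. Qed.
Let sqrt_s_gt0 : 0 < Num.sqrt s. Proof. by rewrite sqrtr_gt0. Qed.

Let lr_sqr_mul_s : 2 * (lr ^+ 2 * s) = 2 * A + s * E.
Proof. by rewrite mulrA lr_sqr -s_sqr; ring. Qed.

Let li_sqr_mul_s : 2 * (li ^+ 2 * s) = 2 * A - s * E.
Proof. by rewrite mulrA li_sqr -s_sqr; ring. Qed.

Let sE_ge0 : 0 <= s * E. Proof. exact: mulr_ge0 (ltW s_gt0) E_ge0. Qed.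

Let A_le_sA : A <= s * A. Proof. by rewrite ler_peMl. Qed.
Let sA_le : s * A <= 3 / 2 * A. Proof. by rewrite ler_wpM2r. Qed.
Let sE_le_sA : s * E <= s * A. Proof. by rewrite ler_pM2l. Qed.

Lemma roots_mul_ge : A / 2 <= lr * li.
Proof.
apply: le_of_sqr_le; first exact: mulr_ge0.
have prod_sqr : 4 * (lr * li) ^+ 2 = 2 * A ^+ 2 - E ^+ 2.
  rewrite -s_sqr; have -> : 4 * (lr * li) ^+ 2 = (2 * lr ^+ 2) * (2 * li ^+ 2) by ring.
  by rewrite lr_sqr li_sqr; ring.
have : E ^+ 2 <= A ^+ 2 by rewrite ler_pXn2r ?nnegrE ?(le_trans E_ge0).
nra.
Qed.

Lemma lr_ge : Num.sqrt A / Num.sqrt s <= lr.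
Proof.
apply: le_of_sqr_le => //.
rewrite expr_div_n sqr_sqrtr // sqrt_s_sqr ler_pdivrMr //.
by have := lr_sqr_mul_s; have := sE_ge0; lra.
Qed.

Lemma lr_le : lr <= Num.sqrt s * Num.sqrt A.
Proof.
apply: le_of_sqr_le; first by rewrite mulr_ge0 ?sqrtr_ge0.
rewrite exprMn sqrt_s_sqr sqr_sqrtr //.
by have := A_le_sA; have := lr_sqr; have := E_le_A; lra.
Qed.

Lemma li_ge : Num.sqrt A / (2 * Num.sqrt s) <= li.
Proof.
apply: le_of_sqr_le => //.
rewrite expr_div_n sqr_sqrtr // exprMn sqrt_s_sqr ler_pdivrMr ?mulr_gt0 //.
by have := li_sqr_mul_s; have := sE_le_sA; have := sA_le; lra.
Qed.

Lemma li_le : li <= Num.sqrt A / Num.sqrt s.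
Proof.
apply: le_of_sqr_le; first by rewrite divr_ge0 ?sqrtr_ge0.
rewrite expr_div_n sqr_sqrtr // sqrt_s_sqr ler_pdivlMr //.
by have := li_sqr_mul_s; have := sE_ge0; lra.
Qed.

Lemma root_bounds :
  [/\ A / 2 <= lr * li,
       Num.sqrt A / Num.sqrt s <= lr, lr <= Num.sqrt s * Num.sqrt A,
       Num.sqrt A / (2 * Num.sqrt s) <= li & li <= Num.sqrt A / Num.sqrt s].
Proof. by split; [exact: roots_mul_ge | exact: lr_ge | exact: lr_le | exact: li_ge | exact: li_le]. Qed.

End CharacteristicRoots.

Theorem lemma3 (R : realType) :
  exists eps0 : R, 0 < eps0 /\
  forall (eps delta alpha B0 lr li : R),
    0 < eps -> eps < eps0 ->
    3^-1 <= delta -> delta <= 1 ->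
    0 < alpha -> alpha * delta < 1 ->
    0 <= B0 -> B0 <= B0max alpha delta ->
    alpha >= 10 / 3 * eps ^+ 2 ->
    0 <= lr -> 0 <= li ->
    2 * lr ^+ 2 = Num.sqrt 2 * Atilde delta B0
                  + eps ^+ 2 * B0 ^+ 2 * (1 + delta ^+ 2) ^+ 2 ->
    2 * li ^+ 2 = Num.sqrt 2 * Atilde delta B0
                  - eps ^+ 2 * B0 ^+ 2 * (1 + delta ^+ 2) ^+ 2 ->
    (lr * li >= Atilde delta B0 / 2
     /\ Num.sqrt (Atilde delta B0) / Num.sqrt (Num.sqrt 2) <= lr
     /\ lr <= Num.sqrt (Num.sqrt 2) * Num.sqrt (Atilde delta B0)
     /\ Num.sqrt (Atilde delta B0) / (2 * Num.sqrt (Num.sqrt 2)) <= li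
     /\ li <= Num.sqrt (Atilde delta B0) / Num.sqrt (Num.sqrt 2)
     /\ Atilde delta 0 = 1
     /\ Atilde delta (B0max alpha delta) = alpha * delta /\
        forall B1 B2 : R, 0 <= B1 -> B1 < B2 -> B2 <= B0max alpha delta ->
          Atilde delta B2 < Atilde delta B1).
Proof.
exists 1; split => [|eps delta alpha B0 lr li _ _ hd1 hd2 ha had hB0 hB0m hae hlr hli Elr Eli].
  exact: ltr01.
have had0 : 0 <= alpha * delta.
  by rewrite mulr_ge0 ?ltW // (lt_le_trans _ hd1) ?invr_gt0.
have had1 : (alpha * delta) ^+ 2 <= 1 by rewrite expr_le1 // ltW.
have hs0 : 0 < Num.sqrt (2 : R) by rewrite sqrtr_gt0.
have hs2 : Num.sqrt (2 : R) ^+ 2 = 2 by rewrite sqr_sqrtr.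
have hE0 : 0 <= eps ^+ 2 * B0 ^+ 2 * (1 + delta ^+ 2) ^+ 2.
  by rewrite -!exprMn sqr_ge0.
have hEA := perturbation_le_Atilde hd1 (le_trans hd2 (ler1n _ 3)) had1 hB0 hB0m hae.
have [? ? ? ? ?] := root_bounds hs0 hs2 (sqrtr_ge0 _) hE0 hEA hlr hli Elr Eli.
do 5!split => //; split; first exact: Atilde0.
split; first by rewrite Atilde_B0max // ger0_norm.
move=> B1 B2 hB1 hB12 hB2; apply: Atilde_decreasing => //.
exact: le_B0max_le1 had1 (le_trans hB1 (ltW hB12)) hB2.
Qed.
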